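(* Let $(\mathrm{Con},\sqsubseteq,(s_i)_{i\in G})$ be a spatial constraint system with distributed spaces $(\Delta_I)_{I\subseteq G}$, let $I\subseteq G$ and $c,e\in\mathrm{Con}$, and suppose $c\sqsupseteq\Delta_I(e)$. If $e$ is compact and $\pi_I(c)\sqsupseteq e$, then there exists a finite set $J\subseteq I$ such that $c\sqsupseteq\Delta_J(e)$.
   Context: A constraint system (cs) is a complete lattice $(\mathrm{Con},\sqsubseteq)$ with join $\sqcup$, bottom $\mathit{true}$. A space function is a continuous (directed-join preserving) self-map $f$ on $\mathrm{Con}$ with $f(\mathit{true})=\mathit{true}$ and $f(c\sqcup d)=f(c)\sqcup f(d)$; $\mathcal{S}(\mathrm{Con})$ denotes the set of space functions ordered pointwise ($f\preceq g$ iff $f(c)\sqsubseteq g(c)$ for all $c$). A spatial constraint system $(\mathrm{Con},\sqsubseteq,(s_i)_{i\in G})$ is a cs with space functions $s_i$ indexed by an arbitrary (possibly infinite) set $G$. Distributed spaces: $\Delta_I=\max\{f\in\mathcal{S}(\mathrm{Con}) : f\preceq s_i\text{ for all }i\in I\}$ (this maximum exists). $\pi_i(c)=\bigsqcup\{e' : c\sqsupseteq s_i(e')\}$ and $\pi_I(c)=\bigsqcup\{\pi_i(c): i\in I\}$. An element $e$ is compact if for every directed set $D\subseteq\mathrm{Con}$, $e\sqsubseteq\bigsqcup D$ implies $e\sqsubseteq d$ for some $d\in D$. *)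

From Stdlib Require Import List.
Set Implicit Arguments.

Section SCS.
Variable T : Type.
Variable le : T -> T -> Prop.
Variable sup : (T -> Prop) -> T.

Definition is_complete_lattice : Prop :=
  (forall x, le x x) /\
  (forall x y z, le x y -> le y z -> le x z) /\
  (forall x y, le x y -> le y x -> x = y) /\
  (forall S x, S x -> le x (sup S)) /\
  (forall S u, (forall x, S x -> le x u) -> le (sup S) u).

Definition join (x y : T) : T := sup (fun z => z = x \/ z = y).
Definition bot : T := sup (fun _ => False).

Definition directed (D : T -> Prop) : Prop :=
  (exists d, D d) /\
  (forall x y, D x -> D y -> exists z, D z /\ le x z /\ le y z).

Definition continuous (f : T -> T) : Prop :=
  forall D, directed D -> f (sup D) = sup (fun y => exists x, D x /\ y = f x).

Definition space_fun (f : T -> T) : Prop :=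
  continuous f /\ f bot = bot /\ (forall c d, f (join c d) = join (f c) (f d)).

Definition fle (f g : T -> T) : Prop := forall c, le (f c) (g c).

Definition compact (e : T) : Prop :=
  forall D, directed D -> le e (sup D) -> exists d, D d /\ le e d.

Variable G : Type.
Variable s : G -> T -> T.

Definition is_distributed_space (I : G -> Prop) (f : T -> T) : Prop :=
  (space_fun f /\ (forall i, I i -> fle f (s i))) /\
  (forall g, space_fun g -> (forall i, I i -> fle g (s i)) -> fle g f).

Definition pi_i (i : G) (c : T) : T := sup (fun e' => le (s i e') c).
Definition pi_I (I : G -> Prop) (c : T) : T :=
  sup (fun y => exists i, I i /\ y = pi_i i c).
End SCS.

Definition finite_set (G : Type) (J : G -> Prop) : Prop :=
  exists l : list G, forall x, J x -> In x l.

(* Since [pi_I c] is the join of the [pi_i c] for [i] in [I], it is the directed join of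
   the finite subjoins, so the compact element [e] lies below the join of [pi_j c] over
   some finite [J].  A space function below every [s_j] maps that finite join to the join
   of elements below the [s_j (pi_j c)], and [s_j (pi_j c)] is below [c] by continuity of
   [s_j].  So [Delta_J e] is below [c]. *)
From Stdlib Require Import List.
Set Implicit Arguments.

Section CompleteLattice.
Variable T : Type.
Variable le : T -> T -> Prop.
Variable sup : (T -> Prop) -> T.
Hypothesis HL : is_complete_lattice le sup.

Lemma le_refl x : le x x.
Proof. destruct HL as [H _]; auto. Qed.

Lemma le_trans {x y z} : le x y -> le y z -> le x z.
Proof. destruct HL as [_ [H _]]; eauto. Qed.

Lemma le_anti x y : le x y -> le y x -> x = y.
Proof. destruct HL as [_ [_ [H _]]]; auto. Qed.

Lemma le_sup S x : S x -> le x (sup S).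
Proof. destruct HL as [_ [_ [_ [H _]]]]; auto. Qed.

Lemma sup_le S u : (forall x, S x -> le x u) -> le (sup S) u.
Proof. destruct HL as [_ [_ [_ [_ H]]]]; auto. Qed.

Lemma le_joinl x y : le x (join sup x y).
Proof. apply le_sup; auto. Qed.

Lemma le_joinr x y : le y (join sup x y).
Proof. apply le_sup; auto. Qed.

Lemma join_le x y u : le x u -> le y u -> le (join sup x y) u.
Proof. intros; apply sup_le; intros z [-> | ->]; auto. Qed.

Lemma bot_le u : le (bot sup) u.
Proof. apply sup_le; intros _ []. Qed.

Lemma space_fun_mono {f x y} : space_fun le sup f -> le x y -> le (f x) (f y).
Proof.
  intros [_ [_ f_join]] Hxy.
  assert (join_xy : join sup x y = y).
  { apply le_anti; [apply join_le; auto using le_refl | apply le_joinr]. }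
  rewrite <- join_xy, f_join; apply le_joinl.
Qed.

Definition bigjoin (l : list T) : T := fold_right (join sup) (bot sup) l.

Lemma le_bigjoin l x : In x l -> le x (bigjoin l).
Proof.
  induction l as [|a l IH]; [intros [] | intros [-> | Hx]; simpl].
  - apply le_joinl.
  - apply (le_trans (IH Hx)), le_joinr.
Qed.

Lemma bigjoin_le {l u} : (forall x, In x l -> le x u) -> le (bigjoin l) u.
Proof.
  induction l as [|a l IH]; intros Hl; simpl.
  - apply bot_le.
  - apply join_le; [apply Hl; left | apply IH; intros x Hx; apply Hl; right]; auto.
Qed.

Lemma space_fun_bigjoin {f l} : space_fun le sup f -> f (bigjoin l) = bigjoin (map f l).
Proof.
  intros [_ [f_bot f_join]]; induction l as [|a l IH]; simpl.
  - exact f_bot.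
  - now rewrite f_join, IH.
Qed.

(* The finite subjoins of an indexed family form a directed set with the same join. *)
Lemma compact_le_sup_finite {I : Type} (P : I -> Prop) (f : I -> T) e :
  compact le sup e -> le e (sup (fun y => exists i, P i /\ y = f i)) ->
  exists l, (forall i, In i l -> P i) /\ le e (bigjoin (map f l)).
Proof.
  intros e_compact e_le.
  set (D := fun d => exists l, (forall i, In i l -> P i) /\ d = bigjoin (map f l)).
  assert (D_directed : directed le D).
  { split.
    - exists (bot sup), nil; split; [intros _ [] | reflexivity].
    - intros x y [l1 [H1 ->]] [l2 [H2 ->]].
      exists (bigjoin (map f (l1 ++ l2))); split.
      + exists (l1 ++ l2); split; [|reflexivity].
        intros i Hi; apply in_app_or in Hi as [Hi | Hi]; auto.
      + rewrite map_app; split; apply bigjoin_le; intros;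
          apply le_bigjoin, in_or_app; auto. }
  assert (e_le_supD : le e (sup D)).
  { apply (le_trans e_le), sup_le; intros y [i [Hi ->]].
    apply (le_trans (y := bigjoin (map f (i :: nil)))).
    - apply le_bigjoin; simpl; auto.
    - apply le_sup; exists (i :: nil); split; [intros j [-> | []]; auto | reflexivity]. }
  destruct (e_compact D D_directed e_le_supD) as [d [[l [Hl ->]] Hed]].
  exists l; auto.
Qed.

(* The set [{x | f x <= c}] is directed because [f] preserves [bot] and joins. *)
Lemma space_fun_pi_le {f c} : space_fun le sup f -> le (f (sup (fun x => le (f x) c))) c.
Proof.
  intros [f_cont [f_bot f_join]]; rewrite f_cont.
  - apply sup_le; intros y [x [Hx ->]]; exact Hx.
  - split.
    + exists (bot sup); rewrite f_bot; apply bot_le.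
    + intros x y Hx Hy; exists (join sup x y); split.
      * rewrite f_join; apply join_le; assumption.
      * split; [apply le_joinl | apply le_joinr].
Qed.

End CompleteLattice.

Theorem mainTheorem4 (T : Type) (le : T -> T -> Prop) (sup : (T -> Prop) -> T)
  (G : Type) (s : G -> T -> T) (Delta : (G -> Prop) -> T -> T)
  (HL : is_complete_lattice le sup)
  (Hs : forall i, space_fun le sup (s i))
  (HDelta : forall I, is_distributed_space le sup s I (Delta I))
  (I : G -> Prop) (c e : T)
  (Hce : le (Delta I e) c)
  (He : compact le sup e)
  (Hpi : le e (pi_I le sup s I c)) :
  exists J : G -> Prop, finite_set J /\ (forall j, J j -> I j) /\ le (Delta J e) c.
Proof.
  destruct (compact_le_sup_finite HL I (fun i => pi_i le sup s i c) He Hpi)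
    as [l [l_in_I e_le]].
  exists (fun j => In j l); split; [exists l; auto | split; [exact l_in_I |]].
  destruct (HDelta (fun j => In j l)) as [[Delta_space Delta_le_s] _].
  apply (le_trans HL (space_fun_mono HL Delta_space e_le)).
  rewrite (space_fun_bigjoin Delta_space), map_map.
  apply (bigjoin_le HL); intros y Hy; apply in_map_iff in Hy as [j [<- Hj]].
  apply (le_trans HL (Delta_le_s j Hj _)), (space_fun_pi_le HL), Hs.
Qed.
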